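(* Let $p$ be a prime, $S$ a finite $p$-group acting on a finitely generated abelian group $\mathcal{U}$, and $\varepsilon:\mathcal{U}\to\mathbb{F}_p^d$ a surjective homomorphism with $\varepsilon(su)=\varepsilon(u)$ for all $s\in S$, $u\in\mathcal{U}$. Let $L_1\oplus L_2=\mathbb{F}_p^d$ be a direct sum decomposition, $\pi_i$ the projections onto $L_i$ and $\varepsilon_i=\pi_i\circ\varepsilon$ for $i=1,2$. Suppose $C_1,C_2$ are numbers such that $|Su|\geq C_i$ whenever $\varepsilon_i(u)\neq0$ ($i=1,2$). Then $$\operatorname{Rank}(S,\mathcal{U};p)\geq C_1\dim_{\mathbb{F}_p}L_1+C_2\dim_{\mathbb{F}_p}L_2.$$
   Context: A subset $\Gamma\subset\mathcal{U}$ is $p$-generating if the subgroup it generates has finite index prime to $p$. For a finite group $S$ acting on $\mathcal{U}$ with Sylow $p$-subgroup $S_p$, $\operatorname{Rank}(S,\mathcal{U};p)$ is the minimal cardinality of an $S_p$-invariant $p$-generating subset of $\mathcal{U}$. $Su$ denotes the $S$-orbit of $u$. *)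

From mathcomp Require Import all_boot all_order all_fingroup all_algebra all_solvable.
Set Implicit Arguments. Unset Strict Implicit. Unset Printing Implicit Defensive.
Import GRing.Theory.
Local Open Scope ring_scope.

Definition gen_subgroup (U : zmodType) (gens : seq U) : U -> Prop :=
  fun x => exists c : 'I_(size gens) -> int,
    x = \sum_(i < size gens) gens`_i *~ c i.

Definition fin_generated (U : zmodType) : Prop :=
  exists gens : seq U, forall x : U, gen_subgroup gens x.

Definition has_index (U : zmodType) (H : U -> Prop) (n : nat) : Prop :=
  exists r : seq U,
    [/\ size r = n,
        forall u : U, exists2 i, (i < n)%N & H (u - r`_i)
      & forall i j, (i < n)%N -> (j < n)%N -> H (r`_i - r`_j) -> i = j].

Definition p_generating (p : nat) (U : zmodType) (Gamma : seq U) : Prop :=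
  exists n : nat, has_index (gen_subgroup Gamma) n /\ coprime n p.

(* Gamma (a finite subset of U, given as a duplicate-free list) is invariant
   under the action [act] of S. *)
Definition invariant_set (gT : finGroupType) (S : {set gT}) (U : zmodType)
  (act : gT -> U -> U) (Gamma : seq U) : Prop :=
  forall s g, s \in S -> g \in Gamma -> act s g \in Gamma.

Definition orbit_size (gT : finGroupType) (S : {set gT}) (U : zmodType)
  (act : gT -> U -> U) (u : U) : nat :=
  size (undup [seq act s u | s <- enum S]).

Definition is_zmod_action (gT : finGroupType) (S : {group gT}) (U : zmodType)
  (act : gT -> U -> U) : Prop :=
  [/\ forall u, act 1%g u = u,
      forall s t u, s \in S -> t \in S -> act (s * t)%g u = act s (act t u)
    & forall s x y, s \in S -> act s (x + y) = act s x + act s y].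

(* The images eps(Gamma) span F_p^d.  Otherwise projecting F_p^d onto a
   nonzero complement Q of their span gives an additive map U -> Q that is onto
   and kills the subgroup H generated by Gamma.  Translating coset
   representatives of H by u shifts the fibres of this map over them, so all
   fibres have the same size and |Q|, a positive power of p, divides the index
   of H, which is prime to p.
   Hence at least dim L_i points of eps(Gamma) have a nonzero L_i-component,
   and at least dim L_1 + dim L_2 have some nonzero component, so Hall's
   condition for two sets yields disjoint sets A_1, A_2 of such points with
   |A_i| = dim L_i.  Over w = eps(g) in A_i the fibre of Gamma contains the
   orbit Sg, since eps is S-invariant and Gamma is S-stable, so it has at least
   C_i elements. *)

From HB Require Import structures.
From mathcomp Require Import all_boot all_order all_fingroup all_algebra all_solvable.
From mathcomp Require Import all_field zify.
Set Implicit Arguments. Unset Strict Implicit. Unset Printing Implicit Defensive.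
Import Order.TTheory GRing.Theory Num.Theory.
Local Open Scope ring_scope.

Lemma gen_subgroupB (U : zmodType) (G : seq U) x y :
  gen_subgroup G x -> gen_subgroup G y -> gen_subgroup G (x - y).
Proof.
move=> [c ->] [c' ->]; exists (fun i => c i - c' i).
by rewrite -sumrB; apply: eq_bigr => i _; rewrite mulrzBr.
Qed.

Lemma gen_subgroup_span (K : fieldType) (vT : vectType K) (U : zmodType)
    (f : {additive U -> vT}) (G : seq U) x :
  gen_subgroup G x -> f x \in <<map f G>>%VS.
Proof.
move=> [c ->]; rewrite raddf_sum; apply: rpred_sum => i _.
by rewrite raddfMz; apply/rpredMz/memv_span/map_f/mem_nth.
Qed.

Section CosetTranslation.

Variables (U : zmodType) (H : U -> Prop) (r : seq U).
Hypothesis H_subr : forall x y, H x -> H y -> H (x - y).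
Hypothesis r_cover : forall u, exists2 i, (i < size r)%N & H (u - r`_i).
Hypothesis r_sep :
  forall i j, (i < size r)%N -> (j < size r)%N -> H (r`_i - r`_j) -> i = j.

Local Notation n := (size r).

Lemma coset_translation u : exists2 sigma : 'I_n -> 'I_n,
  injective sigma & forall i : 'I_n, H (r`_i + u - r`_(sigma i)).
Proof.
have /fin_all_exists[sigma sigmaP] :
    forall i : 'I_n, exists j : 'I_n, H (r`_i + u - r`_j).
  by move=> i; have [j lt_jn Hj] := r_cover (r`_i + u); exists (Ordinal lt_jn).
exists sigma => // i i' eq_sigma; apply/val_inj/(r_sep (ltn_ord i) (ltn_ord i')).
have := H_subr (sigmaP i) (sigmaP i'); rewrite eq_sigma.
by rewrite opprB addrA subrK [r`_i' + u]addrC addrKA.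
Qed.

Variables (W : finZmodType) (phi : {additive U -> W}).
Hypothesis phi_H : forall x, H x -> phi x = 0.

Let fibre w := #|[set i : 'I_n | phi r`_i == w]|.

Lemma fibre_leq_translate u w : (fibre w <= fibre (w + phi u)%R)%N.
Proof.
have [sigma sigma_inj sigmaP] := coset_translation u.
rewrite /fibre -(card_imset _ sigma_inj); apply/subset_leq_card/subsetP.
move=> _ /imsetP[i + ->]; rewrite !inE => /eqP <-.
by have /eqP := phi_H (sigmaP i); rewrite raddfB raddfD subr_eq0 eq_sym.
Qed.

Lemma fibre_image u : fibre (phi u) = fibre 0.
Proof.
apply/eqP; rewrite eqn_leq.
have := fibre_leq_translate (- u) (phi u); rewrite raddfN subrr => ->.
by have := fibre_leq_translate u 0; rewrite add0r.
Qed.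

Lemma index_image_dvd (A : {pred W}) :
  (forall u, phi u \in A) -> (forall w, w \in A -> exists u, phi u = w) ->
  (#|A| %| n)%N.
Proof.
move=> phiA phi_onto; suff -> : n = (#|A| * fibre 0%R)%N by apply: dvdn_mulr.
rewrite -[n]card_ord -sum1_card -sum_nat_const.
rewrite (partition_big (fun i : 'I_n => phi r`_i) (mem A)) => [|i _]; last exact: phiA.
apply: eq_bigr => _ /phi_onto[u <-].
by rewrite -(fibre_image u) /fibre -sum1_card; apply: eq_bigl => i; rewrite inE.
Qed.

End CosetTranslation.

Lemma has_index_image_dvd (U : zmodType) (H : U -> Prop) n
    (W : finZmodType) (phi : {additive U -> W}) (A : {pred W}) :
  (forall x y, H x -> H y -> H (x - y)) -> has_index H n ->
  (forall x, H x -> phi x = 0) ->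
  (forall u, phi u \in A) -> (forall w, w \in A -> exists u, phi u = w) ->
  (#|A| %| n)%N.
Proof.
move=> H_subr [r [<- r_cover r_sep]] phi_H.
exact: (index_image_dvd H_subr r_cover r_sep phi_H (A := A)).
Qed.

Section DirectProjection.

Variables (K : fieldType) (vT : vectType K) (U V : {vspace vT}).
Hypothesis UV0 : (U :&: V = 0)%VS.

Lemma daddv_pi_eq0 v : v \in V -> daddv_pi U V v = 0.
Proof.
move=> Vv; have VU0 : (V :&: U = 0)%VS by rewrite capvC.
have := daddv_pi_add UV0 (subvP (addvSr U V) v Vv).
by rewrite (daddv_pi_id VU0 Vv) -{3}[v]add0r => /addIr.
Qed.

Lemma limg_daddv_pi : limg (daddv_pi U V) = U.
Proof.
apply/vspaceP=> u; apply/memv_imgP/idP=> [[w _ ->] | Uu]; first exact: memv_pi.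
by exists u; rewrite ?memvf ?daddv_pi_id.
Qed.

End DirectProjection.

Lemma p_generating_span (p : nat) (U : zmodType) (d : nat)
    (eps : {additive U -> 'rV['F_p]_d}) (Gamma : seq U) :
  prime p -> (forall v, exists u, eps u = v) -> p_generating p Gamma ->
  <<map eps Gamma>>%VS = fullv.
Proof.
move=> p_pr eps_surj [n [index_n coprime_np]].
set V0 := <<map eps Gamma>>%VS; set Q := (V0^C)%VS.
have QV0 : (Q :&: V0 = 0)%VS by rewrite capvC capv_compl.
have : (#|Q| %| n)%N.
  (* [in Q] rather than Q: a {vspace} is no {pred}, but the cardinals agree. *)
  apply: (has_index_image_dvd (phi := daddv_pi Q V0 \o eps) (A := [in Q]) _ index_n).
  - exact: gen_subgroupB.
  - by move=> x /(gen_subgroup_span eps) /(daddv_pi_eq0 QV0).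
  - by move=> u; apply: memv_pi.
  - move=> q Qq; have [u eps_u] := eps_surj q.
    by exists u; rewrite /= eps_u daddv_pi_id.
rewrite card_vspace card_Fp // => dvd_n.
have [dimQ0 | dimQ_gt0] := posnP (\dim Q); last first.
  move: (coprime_dvdl dvd_n coprime_np).
  by rewrite coprime_pexpl // prime_coprime // dvdnn.
apply/eqP; rewrite eqEdim subvf /=.
by move: dimQ0; rewrite dimv_compl => /eqP; rewrite subn_eq0.
Qed.

Lemma dim_limg_span_card_support (F : finFieldType) (d : nat) (wT : vectType F)
    (f : 'Hom('rV[F]_d, wT)) (X : seq 'rV[F]_d) :
  (\dim (f @: <<X>>) <= #|[set w in X | f w != 0%R]|)%N.
Proof.
set N := [set w in X | _].
have sub_N : (f @: <<X>> <= <<map f (enum N)>>)%VS.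
  rewrite limg_span; apply/span_subvP => _ /mapP[w Xw ->].
  have [-> | nz_fw] := eqVneq (f w) 0; first exact: mem0v.
  by apply/memv_span/map_f; rewrite mem_enum inE Xw.
by rewrite (leq_trans (dimvS sub_N)) // (leq_trans (dim_span _)) // size_map -cardE.
Qed.

Section DirectSumSupports.

Variables (F : finFieldType) (d : nat) (X : seq 'rV[F]_d) (U V : {vspace 'rV[F]_d}).
Hypothesis span_X : <<X>>%VS = fullv.

Lemma dim_leq_card_daddv_support :
  (U :&: V = 0)%VS -> (\dim U <= #|[set w in X | daddv_pi U V w != 0%R]|)%N.
Proof.
by move=> UV0; rewrite -{1}(limg_daddv_pi UV0) -span_X dim_limg_span_card_support.
Qed.

Lemma dimD_leq_card_daddv_support :
  (U + V = fullv)%VS -> directv (U + V) ->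
  (\dim U + \dim V <= #|[set w in X | daddv_pi U V w != 0%R] :|:
                        [set w in X | daddv_pi V U w != 0%R]|)%N.
Proof.
move=> UV_full UV_direct; have UV0 : (U :&: V = 0)%VS by apply/directv_addP.
move: UV_direct; rewrite directvE /= => /eqP <-.
rewrite UV_full -span_X -[<<X>>%VS]lim1g.
apply: leq_trans (dim_limg_span_card_support _ _) (subset_leq_card _).
apply/subsetP => w /setIdP[Xw]; rewrite id_lfunE !inE Xw /=.
apply: contraR; rewrite negb_or !negbK => /andP[/eqP piUw /eqP piVw].
have UVw : w \in (U + V)%VS by rewrite UV_full memvf.
by rewrite -(daddv_pi_add UV0 UVw) piUw piVw addr0.
Qed.

End DirectSumSupports.

Lemma subset_card_exists (T : finType) (X : {set T}) k :
  (k <= #|X|)%N -> exists2 Y : {set T}, Y \subset X & #|Y| = k.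
Proof.
case/card_geqP=> s [uniq_s size_s sX]; exists [set x in s].
  by apply/subsetP => x; rewrite inE => /sX.
by rewrite cardsE (card_uniqP uniq_s).
Qed.

Lemma subset_card_nested_exists (T : finType) (N X : {set T}) a :
  X \subset N -> (a <= #|N|)%N ->
  exists A : {set T}, [/\ A \subset N, #|A| = a & (A \subset X) || (X \subset A)].
Proof.
move=> sXN le_aN; have [le_aX | lt_Xa] := leqP a #|X|.
  have [A sAX cardA] := subset_card_exists le_aX.
  by exists A; rewrite (subset_trans sAX sXN) sAX.
have le_aNX : (a - #|X| <= #|N :\: X|)%N.
  by rewrite cardsD (setIidPr sXN) leq_sub2r.
have [B sB cardB] := subset_card_exists le_aNX.
have XB0 : X :&: B = set0.
  apply/setP => x; rewrite !inE; apply/negbTE/andP => -[Xx Bx].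
  by have := subsetP sB x Bx; rewrite inE Xx.
exists (X :|: B); split; last by rewrite subsetUl orbT.
  by rewrite subUset sXN (subset_trans sB (subsetDl _ _)).
by rewrite cardsU XB0 cards0 cardB; lia.
Qed.

Lemma disjoint_subsets_card_exists (T : finType) (N1 N2 : {set T}) a b :
  (a <= #|N1|)%N -> (b <= #|N2|)%N -> (a + b <= #|N1 :|: N2|)%N ->
  exists A B : {set T},
    [/\ A \subset N1, B \subset N2, [disjoint A & B], #|A| = a & #|B| = b].
Proof.
move=> le_a le_b le_ab.
have [A [sAN1 cardA nested]] := subset_card_nested_exists (subsetDl N1 N2) le_a.
have le_b' : (b <= #|N2 :\: A|)%N.
  case/orP: nested => [sA | sA].
    suff -> : N2 :\: A = N2 by [].
    apply/setDidPl; rewrite disjoint_sym disjoints_subset.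
    by apply: subset_trans sA _; rewrite setDE subsetIr.
  have -> : #|N2 :\: A| = (#|A :|: N2| - #|A|)%N.
    by rewrite cardsU cardsD setIC; have := subset_leq_card (subsetIr A N2); lia.
  suff -> : A :|: N2 = N1 :|: N2 by lia.
  apply/eqP; rewrite eqEsubset !subUset !subsetUr (subset_trans sAN1) ?subsetUl //=.
  by rewrite andbT setUC -subDset.
have [B sB cardB] := subset_card_exists le_b'.
exists A, B; split => //; first exact: subset_trans sB (subsetDl _ _).
by rewrite disjoint_sym disjoints_subset (subset_trans sB) // setDE subsetIr.
Qed.

Lemma orbit_size_leq_count (gT : finGroupType) (S : {set gT}) (U : zmodType)
    (act : gT -> U -> U) (T : eqType) (e : U -> T) (Gamma : seq U) g :
  (forall s u, s \in S -> e (act s u) = e u) -> invariant_set S act Gamma ->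
  g \in Gamma -> (orbit_size S act g <= count (fun x => e x == e g) Gamma)%N.
Proof.
move=> e_inv Gamma_inv Gamma_g; rewrite /orbit_size -size_filter.
apply: uniq_leq_size (undup_uniq _) _ => x; rewrite mem_undup => /mapP[s + ->].
by rewrite mem_enum => Ss; rewrite mem_filter e_inv ?eqxx ?Gamma_inv.
Qed.

Lemma count_fibres_disjoint_ge (R : numDomainType) (V : eqType) (T : finType)
    (e : V -> T) (s : seq V) (A B : {set T}) (C1 C2 : R) :
  [disjoint A & B] ->
  {in A, forall w, C1 <= (count (fun x => e x == w) s)%:R} ->
  {in B, forall w, C2 <= (count (fun x => e x == w) s)%:R} ->
  C1 * #|A|%:R + C2 * #|B|%:R <= (size s)%:R.
Proof.
move=> dAB geA geB; pose fibre w := count (fun x => e x == w) s.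
apply: (@le_trans _ _ (\sum_(w in A) (fibre w)%:R + \sum_(w in B) (fibre w)%:R)).
  by rewrite !mulr_natr -!sumr_const; apply: lerD; apply: ler_sum.
have -> : size s = (\sum_w fibre w)%N.
  rewrite -sum1_size (partition_big e predT) //=.
  by apply: eq_bigr => w _; rewrite sum1_count.
rewrite -!natr_sum -natrD ler_nat -bigU //= big_mkcond.
by apply: leq_sum => w _; case: ifP.
Qed.

Theorem lemma13p1
  (p : nat) (p_pr : prime p)
  (gT : finGroupType) (S : {group gT}) (pS : (p.-group S)%g)
  (U : zmodType) (U_fg : fin_generated U)
  (act : gT -> U -> U) (act_ok : is_zmod_action S act)
  (d : nat) (eps : U -> 'rV[ 'F_p ]_d)
  (eps_add : forall x y, eps (x + y) = eps x + eps y)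
  (eps_surj : forall v, exists u, eps u = v)
  (eps_inv : forall s u, s \in S -> eps (act s u) = eps u)
  (L1 L2 : {vspace 'rV[ 'F_p ]_d})
  (L_sum : (L1 + L2)%VS = fullv) (L_direct : directv (L1 + L2))
  (R : realFieldType) (C1 C2 : R)
  (hC1 : forall u, daddv_pi L1 L2 (eps u) != 0 -> C1 <= (orbit_size S act u)%:R)
  (hC2 : forall u, daddv_pi L2 L1 (eps u) != 0 -> C2 <= (orbit_size S act u)%:R)
  (Gamma : seq U) (Gamma_uniq : uniq Gamma)
  (Gamma_inv : invariant_set S act Gamma)
  (Gamma_gen : p_generating p Gamma) :
  C1 * (\dim L1)%:R + C2 * (\dim L2)%:R <= (size Gamma)%:R.
Proof.
have eps0 : eps 0 = 0 by apply: (addrI (eps 0)); rewrite -eps_add !addr0.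
pose epsA : {additive U -> 'rV['F_p]_d} :=
  HB.pack eps (GRing.isNmodMorphism.Build _ _ eps (eps0, eps_add)).
set X := map eps Gamma.
have span_X : <<X>>%VS = fullv :=
  p_generating_span (eps := epsA) p_pr eps_surj Gamma_gen.
have L12 : (L1 :&: L2 = 0)%VS by apply/directv_addP.
have L21 : (L2 :&: L1 = 0)%VS by rewrite capvC.
have dimL1 := dim_leq_card_daddv_support span_X L12.
have dimL2 := dim_leq_card_daddv_support span_X L21.
have dimL12 := dimD_leq_card_daddv_support span_X L_sum L_direct.
have [A [B [sAN1 sBN2 dAB cardA cardB]]] :=
  disjoint_subsets_card_exists dimL1 dimL2 dimL12.
have fibre_ge (C : R) (pi : 'End('rV['F_p]_d)) :
    (forall u, pi (eps u) != 0 -> C <= (orbit_size S act u)%:R) ->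
    {in [set w in X | pi w != 0], forall w,
      C <= (count (fun x => eps x == w) Gamma)%:R}.
  move=> hC w; rewrite inE => /andP[/mapP[g Gamma_g ->] nz].
  apply: le_trans (hC _ nz) _; rewrite ler_nat.
  exact: orbit_size_leq_count eps_inv Gamma_inv Gamma_g.
rewrite -cardA -cardB; apply: (count_fibres_disjoint_ge (e := eps) dAB).
- by move=> w /(subsetP sAN1) /(fibre_ge _ _ hC1).
- by move=> w /(subsetP sBN2) /(fibre_ge _ _ hC2).
Qed.
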